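(* Fix $n\ge 1$. The set $\{\beta^k\,\mathcal{G}^{(\beta)}_a : k\in\mathbb{Z}_{\ge 0},\ a \text{ a weak composition of length } n\}$ is a basis of the free $\mathbb{Z}$-module $\mathbb{Z}[x_1,\dots,x_n][\beta]$. Consequently, $\{\mathcal{G}^{(-1)}_a : a \text{ a weak composition of length } n\}$ is a $\mathbb{Z}$-basis of $\mathbb{Z}[x_1,\dots,x_n]$.
   Context: A weak composition of length $n$ is a sequence $a=(a_1,\dots,a_n)$ of nonnegative integers; $|a|=\sum a_i$, and $\mathtt{flat}(a)$ is the sequence of nonzero entries of $a$ in order. A weak komposition is a weak composition in which each positive entry is colored either black or red (zero entries are uncolored); its excess $\mathrm{ex}(b)$ is the number of red entries. Let $a$ be a weak composition of length $n$ whose nonzero entries are exactly in positions $n_1<\dots<n_\ell$. A weak komposition $b$ of length $n$ is a glide of $a$ if there exist integers $0=i_0<i_1<\dots<i_\ell$ with $i_j\le n_j$ for all $j$, such that $b_k=0$ for all $k>i_\ell$, and for each $j=1,\dots,\ell$: (i) $b_{i_{j-1}+1}+\dots+b_{i_j}=\mathtt{flat}(a)_j+(\text{number of red entries among } b_{i_{j-1}+1},\dots,b_{i_j})$; (ii) the first nonzero entry among $b_{i_{j-1}+1},\dots,b_{i_j}$ is black. (Kompositions differing only in coloring are distinct glides.) With $\beta$ a formal parameter, the glide polynomial is $\mathcal{G}^{(\beta)}_a=\mathcal{G}^{(\beta)}_a(x_1,\dots,x_n)=\sum_{b}\beta^{\mathrm{ex}(b)}x_1^{b_1}\cdots x_n^{b_n}$,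 summed over all glides $b$ of $a$. *)

From mathcomp Require Import all_boot all_order all_algebra.
Set Implicit Arguments. Unset Strict Implicit. Unset Printing Implicit Defensive.
Import GRing.Theory Num.Theory.

(* Weak compositions of length n are n.-tuple nat (entry i, 0-indexed, is a_(i+1)).
   A weak komposition is a pair (b, r) : n.-tuple nat * n.-tuple bool, where
   r i = true means entry i is red; r may only be true at positive entries
   (zero entries are uncolored, encoded as r i = false). *)

Definition flat (s : seq nat) : seq nat := [seq x <- s | x != 0%N].

(* 1-indexed positions n_1 < ... < n_l of the nonzero entries of a *)
Definition nzpos (n : nat) (a : seq nat) : seq nat :=
  [seq i.+1 | i <- iota 0 n & nth 0%N a i != 0%N].

Definition iskomp (n : nat) (b : n.-tuple nat) (r : n.-tuple bool) : bool :=
  all (fun i => nth false r i ==> (0 < nth 0%N b i)) (iota 0 n).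

(* Conditions (i) and (ii) for the block of 1-indexed positions lo+1, ..., hi
   (0-indexed positions lo, ..., hi-1) with target value m = flat(a)_j. *)
Definition block_ok (n : nat) (b : n.-tuple nat) (r : n.-tuple bool)
    (lo hi m : nat) : bool :=
  let ks := iota lo (hi - lo) in
  (sumn [seq nth 0%N b k | k <- ks] == m + count (fun k => nth false r k) ks)
  && all (fun k => ((nth 0%N b k != 0%N)
                    && all (fun k' => nth 0%N b k' == 0%N) (iota lo (k - lo)))
                   ==> ~~ nth false r k) ks.

(* b (colored by r) is a glide of a: there exist 0 = i_0 < i_1 < ... < i_l
   (here the tuple s lists i_1, ..., i_l, each in {0..n}) with i_j <= n_j,
   b_k = 0 for k > i_l, and each block satisfying (i), (ii). *)
Definition glide (n : nat) (a b : n.-tuple nat) (r : n.-tuple bool) : bool :=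
  let l := size (flat a) in
  [exists s : l.-tuple 'I_n.+1,
    let S := 0%N :: [seq val i | i <- s] in
    [&& sorted ltn S,
        all (fun j => nth 0%N S j.+1 <= nth 0%N (nzpos n a) j) (iota 0 l),
        all (fun k => nth 0%N b k == 0%N) (iota (last 0%N S) (n - last 0%N S)) &
        all (fun j => block_ok b r (nth 0%N S j) (nth 0%N S j.+1) (nth 0%N (flat a) j))
            (iota 0 l)]].

(* Coefficient of x^e beta^k in the glide polynomial G^(beta)_a:
   the number of glides of a with underlying entries e and excess k. *)
Definition Gcoef (n : nat) (a e : n.-tuple nat) (k : nat) : nat :=
  #|[pred r : n.-tuple bool | [&& iskomp e r, glide a e r & count id r == k]]|.

(* Coefficient of x^e in G^(-1)_a = sum over glides with values e of (-1)^ex. *)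
Definition Gm1coef (n : nat) (a e : n.-tuple nat) : int :=
  (\sum_(r : n.-tuple bool | iskomp e r && glide a e r) ((-1) ^+ count id r)%R)%R.

(* Z[x_1..x_n][beta] is represented by finitely supported coefficient functions
   f e d = coefficient of x^e beta^d; Z[x_1..x_n] by g e = coefficient of x^e. *)
Definition finsupp2 (n : nat) (f : n.-tuple nat -> nat -> int) : Prop :=
  exists N : nat, forall e d, f e d != 0%R -> (d < N) && all (fun x => x < N) e.

Definition finsupp1 (n : nat) (g : n.-tuple nat -> int) : Prop :=
  exists N : nat, forall e, g e != 0%R -> all (fun x => x < N) e.

(* Coefficient of x^e beta^d in beta^k * G^(beta)_a, for p = (k, a). *)
Definition bG (n : nat) (p : nat * n.-tuple nat) (e : n.-tuple nat) (d : nat) : int :=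
  if p.1 <= d then Posz (Gcoef p.2 e (d - p.1)) else 0%R.

(* A glide b of a with excess k satisfies |b| = |a| + k, has at least l(a) + k nonzero
   entries, and dominates a: each prefix sum of b is at least the corresponding prefix sum of a,
   because the block of b replacing the j-th nonzero entry of a ends no later than that entry.
   So a is its own unique glide, coloured all black, and the coefficient of x^b beta^d in
   beta^k G_a vanishes unless (d, b) = (k, a) or b is strictly heavier than a for the weight
   adding up all prefix sums: the transition matrix to the monomial basis is unitriangular.
   Moreover |b| + d - 2 #{i | b_i > 0} never exceeds its value at (k, a), so eliminating the
   terms of a finitely supported polynomial in order of increasing weight stays inside a finite
   set.  At beta = -1 the same argument applies with |b| - #{i | b_i > 0}. *)

From mathcomp Require Import all_boot all_order all_algebra.
From mathcomp Require Import zify.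
Import GRing.Theory Num.Theory.
Set Implicit Arguments. Unset Strict Implicit. Unset Printing Implicit Defensive.

Section Unitriangular.
Local Open Scope ring_scope.
Variables (T : eqType) (B : T -> T -> int) (w : T -> nat).
Hypothesis B_diag : forall p, B p p = 1.
Hypothesis B_triangular : forall p s, B p s != 0 -> s = p \/ (w p < w s)%N.

Lemma unitriangular_free (I : seq T) (c : T -> int) : uniq I ->
  (forall s, \sum_(p <- I) c p * B p s = 0) -> forall p, p \in I -> c p = 0.
Proof.
move=> uI Ic0; suff c0 t p : p \in I -> (w p < t)%N -> c p = 0 by move=> p /c0; apply.
elim: t p => [|t IH] p pI // wpt.
have := Ic0 p; rewrite (bigD1_seq p) //= B_diag mulr1 big1_seq ?addr0 //.
move=> q /andP [qp qI]; have [->|Bqp] := eqVneq (B q p) 0; first by rewrite mulr0.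
case: (B_triangular Bqp) => [pq|wqp]; first by rewrite pq eqxx in qp.
by rewrite (IH q) ?mul0r //; lia.
Qed.

Lemma unitriangular_span_sorted (S : seq T) :
  uniq S -> sorted (relpre w leq) S -> (forall m s, m \in S -> B m s != 0 -> s \in S) ->
  forall f : T -> int, (forall s, f s != 0 -> s \in S) ->
  exists c : T -> int, forall s, f s = \sum_(p <- S) c p * B p s.
Proof.
elim: S => [|m S IH] uS sS cS f fS.
  by exists (fun=> 0) => s; rewrite big_nil; apply/eqP/contraT => /fS.
(* The head m has minimal weight, so no other element of S reaches m through B. *)
case/andP: uS => mS uS; have wmS := order_path_min (relpre_trans leq_trans) sS.
have cS' m' s : m' \in S -> B m' s != 0 -> s \in S.
  move=> m'S Bm's; have := cS m' s; rewrite !inE m'S orbT => /(_ isT Bm's).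
  case/orP=> [/eqP sm|//]; case: (B_triangular Bm's) => [->//|].
  by move/allP: wmS => /(_ m' m'S) /=; rewrite sm; lia.
pose g s := f s - f m * B m s.
have gS s : g s != 0 -> s \in S.
  have [->|sm] := eqVneq s m; first by rewrite /g B_diag mulr1 subrr eqxx.
  rewrite /g; have [f0|/fS] := eqVneq (f s) 0; last by rewrite inE (negbTE sm).
  rewrite f0 sub0r oppr_eq0 mulf_eq0 negb_or => /andP [_ /(cS m)].
  by rewrite !inE eqxx (negbTE sm) => /(_ isT).
have [c gc] := IH uS (path_sorted sS) cS' g gS.
exists (fun p => if p == m then f m else c p) => s.
rewrite big_cons eqxx (eq_big_seq (fun p => c p * B p s)) => [|p pS].
  by rewrite -gc /g addrC subrK.
by rewrite ifN //; apply: contraNneq mS => <-.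
Qed.

(* A potential that does not increase along B and has finite sublevel sets confines the
   elimination to a finite set. *)
Variables (pot : T -> nat) (box : nat -> seq T).
Hypothesis pot_B : forall m s, B m s != 0 -> (pot s <= pot m)%N.
Hypothesis mem_box : forall M s, (pot s <= M)%N -> s \in box M.

Lemma unitriangular_span (f : T -> int) (M : nat) :
  (forall s, f s != 0 -> (pot s <= M)%N) ->
  exists (I : seq T) (c : T -> int), forall s, f s = \sum_(p <- I) c p * B p s.
Proof.
move=> fM; pose S := sort (relpre w leq) (undup [seq s <- box M | (pot s <= M)%N]).
have memS s : (s \in S) = (pot s <= M)%N.
  by rewrite mem_sort mem_undup mem_filter andb_idr // => /mem_box.
have uS : uniq S by rewrite sort_uniq undup_uniq.
have sS : sorted (relpre w leq) S by apply: sort_sorted => x y; apply: leq_total.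
have cS m s : m \in S -> B m s != 0 -> s \in S.
  by rewrite !memS => mM /pot_B smM; apply: leq_trans smM mM.
have fS s : f s != 0 -> s \in S by rewrite memS => /fM.
have [c fc] := unitriangular_span_sorted uS sS cS fS.
by exists S, c.
Qed.

End Unitriangular.

Lemma leq_last x0 (s : seq nat) : path leq x0 s -> {in x0 :: s, forall y, y <= last x0 s}.
Proof.
elim: s x0 => [|z s IH] x0 /=; first by move=> _ y; rewrite inE => /eqP ->.
case/andP=> x0z zs y; rewrite inE => /orP [/eqP ->|ys]; last exact: IH.
by apply: leq_trans x0z _; apply: IH; rewrite ?inE ?eqxx.
Qed.

Lemma sum_blocks (h : nat -> nat) x0 (t : seq nat) : path leq x0 t ->
  \sum_(0 <= j < size t) \sum_(nth 0 (x0 :: t) j <= k < nth 0 (x0 :: t) j.+1) h k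
  = \sum_(x0 <= k < last x0 t) h k.
Proof.
elim: t x0 => [|y t IH] x0 /=; first by rewrite !big_geq.
case/andP=> x0y yt; rewrite big_nat_recl //= (IH y yt) -big_cat_nat //.
by apply: (leq_last yt); rewrite inE eqxx.
Qed.

Lemma mem_leq_sumn x (s : seq nat) : x \in s -> x <= sumn s.
Proof. by elim: s => //= y s IH; rewrite inE => /orP [/eqP ->|/IH]; lia. Qed.

Lemma sumn_nth (s : seq nat) : sumn s = \sum_(0 <= i < size s) nth 0 s i.
Proof. by rewrite sumnE (big_nth 0). Qed.

Lemma sumn_flat s : sumn (flat s) = sumn s.
Proof. by elim: s => //= x s IH; rewrite /flat /=; case: eqP => [->|_] //=; rewrite -IH. Qed.

Lemma count_big (T : Type) (p : pred T) (s : seq T) : count p s = \sum_(i <- s) p i.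
Proof. by rewrite -sumn_count sumnE big_map. Qed.

Lemma path_ltn_succ x (s : seq nat) : path ltn x s -> path ltn x.+1 (map succn s).
Proof. by elim: s x => //= y s IH x /andP [xy /IH ->]; rewrite ltnS xy. Qed.

Lemma all_leq_sumn (s : seq nat) K : sumn s <= K -> all (fun x => x <= K) s.
Proof. by move=> sK; apply/allP => x /mem_leq_sumn; move/leq_trans; apply. Qed.

Lemma sumn_leq_size (s : seq nat) N : all (fun x => x < N) s -> sumn s <= size s * N.
Proof. by elim: s => //= y s IH /andP [yN /IH]; rewrite mulSn; lia. Qed.

Lemma sumn_tuple n (x : n.-tuple nat) : sumn x = \sum_(0 <= k < n) nth 0 x k.
Proof. by rewrite sumn_nth size_tuple. Qed.

Lemma count_tuple n T (x0 : T) (p : pred T) (x : n.-tuple T) :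
  count p x = \sum_(0 <= k < n) p (nth x0 x k).
Proof. by rewrite count_big (big_nth x0) size_tuple. Qed.

Lemma count_tuple_leq n T (p : pred T) (x : n.-tuple T) : count p x <= n.
Proof. by rewrite -{2}(size_tuple x) count_size. Qed.

Definition nzcount (s : seq nat) := count (fun x => x != 0) s.

Definition nzidx (n : nat) (a : seq nat) := [seq i <- iota 0 n | nth 0 a i != 0].

Lemma mem_nzidx n (a : seq nat) k : (k \in nzidx n a) = (k < n) && (nth 0 a k != 0).
Proof. by rewrite mem_filter mem_iota andbC. Qed.

Section Flat.
Variables (n : nat) (a : n.-tuple nat).

Lemma nzpos_nzidx : nzpos n a = map succn (nzidx n a).
Proof. by []. Qed.

Lemma flat_nzidx : flat a = map (nth 0 a) (nzidx n a).
Proof. by rewrite /flat -{1}(mkseq_nth 0 a) size_tuple /mkseq filter_map. Qed.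

Lemma size_nzidx : size (nzidx n a) = size (flat a).
Proof. by rewrite flat_nzidx size_map. Qed.

Lemma flat_gt0 j : j < size (flat a) -> 0 < nth 0 (flat a) j.
Proof. by move/(mem_nth 0); rewrite /flat mem_filter lt0n => /andP []. Qed.

Lemma nzcount_flat : nzcount a = size (flat a).
Proof. by rewrite /flat size_filter. Qed.

Lemma sum_flat (g : nat -> nat) :
  \sum_(0 <= k < n) g k * nth 0 a k =
  \sum_(0 <= j < size (flat a)) g (nth 0 (nzidx n a) j) * nth 0 (flat a) j.
Proof.
rewrite -size_nzidx; set p := nzidx n a.
transitivity (\sum_(0 <= j < size p) g (nth 0 p j) * nth 0 a (nth 0 p j)).
  rewrite -(big_nth 0 xpredT (fun i => g i * nth 0 a i)) big_filter /index_iota subn0.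
  rewrite [RHS]big_mkcond.
  by apply: eq_bigr => i _; case: eqP => [->|]; rewrite ?muln0.
rewrite big_nat_cond [RHS]big_nat_cond.
by apply: eq_bigr => j /andP [/andP [_ jp] _]; rewrite flat_nzidx (nth_map 0).
Qed.

End Flat.

Section GlideBlocks.
Variables (n : nat) (a b : n.-tuple nat) (r : n.-tuple bool) (t : seq nat).
Hypothesis red_gt0 : forall k, nth false r k -> 0 < nth 0 b k.
Hypothesis size_t : size t = size (flat a).
Hypothesis path_t : path leq 0 t.
Hypothesis last_t : last 0 t <= n.
Hypothesis t_le_nzpos : forall j, j < size (flat a) -> nth 0 (0 :: t) j.+1 <= nth 0 (nzpos n a) j.
Hypothesis b_tail : forall k, last 0 t <= k < n -> nth 0 b k = 0.
Hypothesis t_blocks : forall j, j < size (flat a) ->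
  block_ok b r (nth 0 (0 :: t) j) (nth 0 (0 :: t) j.+1) (nth 0 (flat a) j).

(* t lists the block ends i_1 < ... < i_l of a glide; block j occupies the 0-indexed positions
   lo j <= k < hi j. *)
Local Notation lo j := (nth 0 (0 :: t) j).
Local Notation hi j := (nth 0 (0 :: t) j.+1).

Lemma sum_split_blocks (h : nat -> nat) :
  \sum_(0 <= k < n) h k =
  \sum_(0 <= j < size t) \sum_(lo j <= k < hi j) h k + \sum_(last 0 t <= k < n) h k.
Proof. by rewrite (sum_blocks h path_t) -big_cat_nat. Qed.

Lemma block_sum j : j < size (flat a) ->
  \sum_(lo j <= k < hi j) nth 0 b k = nth 0 (flat a) j + \sum_(lo j <= k < hi j) nth false r k.
Proof. by case/t_blocks/andP => /eqP; rewrite sumnE count_big !big_map. Qed.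

(* The first nonzero entry of a block is black and every red entry is nonzero. *)
Lemma block_nzcount j : j < size (flat a) ->
  1 + \sum_(lo j <= k < hi j) nth false r k <= \sum_(lo j <= k < hi j) (nth 0 b k != 0).
Proof.
move=> hj; have /andP [_ /allP first_black] := t_blocks hj.
have ex_nz : exists k, (lo j <= k < hi j) && (nth 0 b k != 0).
  have : \sum_(lo j <= k < hi j) nth 0 b k != 0 by rewrite block_sum // -lt0n ltn_addr ?flat_gt0.
  rewrite sum_nat_seq_neq0 => /hasP [k]; rewrite mem_index_iota => kin bk.
  by exists k; rewrite kin.
have [k0 /andP [k0in bk0] k0min] := ex_minnP ex_nz.
have rk0 : ~~ nth false r k0.
  apply: (implyP (first_black k0 _)); first by rewrite mem_iota; lia.
  rewrite bk0 /=; apply/allP => k; rewrite mem_iota => kin.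
  by apply/negPn/negP => bk; have := k0min k; rewrite bk andbT; lia.
have one_k0 : \sum_(lo j <= k < hi j) (k == k0) = 1.
  by rewrite -count_big count_uniq_mem ?iota_uniq // mem_index_iota k0in.
rewrite -one_k0 addnC -big_split /=; apply: leq_sum => k _.
have [-> | _] := eqVneq k k0; first by rewrite (negbTE rk0) bk0.
by rewrite addn0; case: (boolP (nth false r k)) => // /red_gt0; rewrite lt0n => ->.
Qed.

Lemma tail_red : \sum_(last 0 t <= k < n) nth false r k = 0.
Proof.
rewrite big_nat_cond big1 // => k /andP [kin _]; apply/eqP; rewrite eqb0.
by apply/negP => /red_gt0; rewrite b_tail.
Qed.

Lemma blocks_sumn :
  \sum_(0 <= k < n) nth 0 b k = sumn (flat a) + \sum_(0 <= k < n) nth false r k.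
Proof.
have tail_b : \sum_(last 0 t <= k < n) nth 0 b k = 0.
  by rewrite big_nat_cond big1 // => k /andP [/b_tail ->].
rewrite !sum_split_blocks tail_b tail_red !addn0 sumn_nth size_t -big_split /=.
by apply: eq_big_nat => j /andP [_ /block_sum].
Qed.

Lemma blocks_nzcount :
  size (flat a) + \sum_(0 <= k < n) nth false r k <= \sum_(0 <= k < n) (nth 0 b k != 0).
Proof.
rewrite !sum_split_blocks tail_red addn0.
have -> : size (flat a) = \sum_(0 <= j < size t) 1 by rewrite sum_nat_const_nat muln1 subn0.
rewrite -big_split /=; apply: (leq_trans _ (leq_addr _ _)).
rewrite big_nat_cond [leqRHS]big_nat_cond.
by apply: leq_sum => j /andP [/andP [_]]; rewrite size_t => /block_nzcount.
Qed.

(* Block j ends at i_j <= n_j, the position of flat(a)_j, so its mass only moves to the left. *)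
Lemma blocks_weighted_sum (g : nat -> nat) : {homo g : x y / x <= y >-> y <= x} ->
  \sum_(0 <= k < n) g k * nth 0 a k <= \sum_(0 <= k < n) g k * nth 0 b k.
Proof.
move=> g_anti; rewrite sum_flat sum_split_blocks size_t; apply: (leq_trans _ (leq_addr _ _)).
rewrite big_nat_cond [leqRHS]big_nat_cond; apply: leq_sum => j /andP [/andP [_ hj] _].
have := t_le_nzpos hj; rewrite nzpos_nzidx (nth_map 0) ?size_nzidx // => hi_nz.
apply: (@leq_trans (g (hi j).-1 * \sum_(lo j <= k < hi j) nth 0 b k)).
  by rewrite block_sum //; apply: leq_mul; [apply: g_anti; lia | apply: leq_addr].
rewrite big_distrr /= big_nat_cond [X in _ <= X]big_nat_cond.
by apply: leq_sum => k /andP [/andP [_ khi] _]; apply: leq_mul => //; apply: g_anti; lia.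
Qed.

End GlideBlocks.

Variant glide_blocks n (a b : n.-tuple nat) (r : n.-tuple bool) : Prop :=
  GlideBlocks (t : seq nat) of
    size t = size (flat a) & path leq 0 t & last 0 t <= n &
    (forall j, j < size (flat a) -> nth 0 (0 :: t) j.+1 <= nth 0 (nzpos n a) j) &
    (forall k, last 0 t <= k < n -> nth 0 b k = 0) &
    (forall j, j < size (flat a) ->
       block_ok b r (nth 0 (0 :: t) j) (nth 0 (0 :: t) j.+1) (nth 0 (flat a) j)).

Section Glide.
Variables (n : nat) (a b : n.-tuple nat) (r : n.-tuple bool).

Lemma glideP : glide a b r -> glide_blocks a b r.
Proof.
case/existsP=> s; set t := map _ s.
case/and4P=> [sorted_s /allP le_nzpos /allP tail_b /allP blocks].
have last_le : last 0 t <= n.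
  have := mem_last 0 t; rewrite inE => /orP [/eqP -> //|/mapP [i _ ->]].
  exact: ltn_ord i.
exists t => //.
- by rewrite size_map size_tuple.
- by apply: sub_path sorted_s => x y /ltnW.
- by move=> j hj; apply: le_nzpos; rewrite mem_iota.
- by move=> k hk; apply/eqP/tail_b; rewrite mem_iota /=; lia.
- by move=> j hj; apply: blocks; rewrite mem_iota.
Qed.

Lemma iskomp_red_gt0 : iskomp b r -> forall k, nth false r k -> 0 < nth 0 b k.
Proof.
move=> /allP komp k rk; have [kn|nk] := ltnP k n.
  by apply: (implyP (komp k _)); rewrite ?mem_iota.
by move: rk; rewrite nth_default // size_tuple.
Qed.

Lemma glide_sumn : iskomp b r -> glide a b r -> sumn b = sumn a + count id r.
Proof.
move=> /iskomp_red_gt0 red_gt0 /glideP [t st pt lt _ tl bl].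
by rewrite sumn_tuple (count_tuple false) -sumn_flat; apply: (blocks_sumn red_gt0 st pt lt tl bl).
Qed.

Lemma glide_nzcount : iskomp b r -> glide a b r -> size (flat a) + count id r <= nzcount b.
Proof.
move=> /iskomp_red_gt0 red_gt0 /glideP [t st pt lt _ tl bl].
rewrite /nzcount (count_tuple false) (count_tuple 0).
exact: (blocks_nzcount red_gt0 st pt lt tl bl).
Qed.

Lemma glide_weighted_sum (g : nat -> nat) : {homo g : x y / x <= y >-> y <= x} ->
  glide a b r -> \sum_(0 <= k < n) g k * nth 0 a k <= \sum_(0 <= k < n) g k * nth 0 b k.
Proof.
by move=> g_anti /glideP [t st pt lt nz _ bl]; apply: (blocks_weighted_sum st pt lt nz bl).
Qed.

End Glide.

Definition psum (K : nat) (x : seq nat) := \sum_(0 <= k < K) nth 0 x k.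

Definition dweight (n : nat) (x : seq nat) := \sum_(K < n.+1) psum K x.

Lemma psum_weighted n K (x : seq nat) : K <= n ->
  \sum_(0 <= k < n) (k < K) * nth 0 x k = psum K x.
Proof.
move=> Kn; rewrite (big_cat_nat (n := K)) //=.
have -> : \sum_(K <= k < n) (k < K) * nth 0 x k = 0.
  by rewrite big_nat_cond big1 // => k /andP [/andP [Kk _] _]; rewrite ltnNge Kk.
rewrite addn0 big_nat_cond [RHS]big_nat_cond.
by apply: eq_bigr => k /andP [/andP [_ ->]]; rewrite mul1n.
Qed.

Lemma glide_psum n (a b : n.-tuple nat) r : glide a b r -> forall K, K <= n -> psum K a <= psum K b.
Proof.
move=> g K Kn; rewrite -!(psum_weighted _ Kn); apply: glide_weighted_sum g => x y xy.
by case: (ltnP y K) => //= yK; rewrite (leq_ltn_trans xy yK).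
Qed.

Lemma psum_inj n (x y : n.-tuple nat) : (forall K, K <= n -> psum K x = psum K y) -> x = y.
Proof.
move=> eq_psum; apply/val_inj/(@eq_from_nth _ 0); rewrite ?size_tuple // => k kn.
have := eq_psum k.+1 kn; rewrite /psum !big_nat_recr //= -!/(psum k _) (eq_psum k (ltnW kn)).
exact: addnI.
Qed.

Lemma dweight_lt n (x y : n.-tuple nat) :
  (forall K, K <= n -> psum K x <= psum K y) -> x != y -> dweight n x < dweight n y.
Proof.
move=> le_psum; rewrite ltnNge; apply: contra => ge_dw; apply/eqP/psum_inj => K Kn.
have [le_dw] := @leqif_sum _ xpredT (fun K : 'I_n.+1 => psum K x == psum K y) _ _
  (fun K _ => leqif_eq (le_psum K (ltn_ord K))).
rewrite eqn_leq le_dw ge_dw => /esym/forallP/(_ (Ordinal (Kn : K < n.+1))).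
exact: eqP.
Qed.

Section SelfGlide.
Variables (n : nat) (a : n.-tuple nat).
Local Notation z := (nzpos n a).
Local Notation l := (size (flat a)).

Lemma sorted_nzidx : sorted ltn (nzidx n a).
Proof. by apply: sorted_filter; [exact: ltn_trans | exact: iota_ltn_sorted]. Qed.

Lemma path_nzpos : path ltn 0 z.
Proof. by rewrite nzpos_nzidx; case: (nzidx n a) sorted_nzidx => //= x q /path_ltn_succ. Qed.

Lemma path_leq_nzpos : path leq 0 z.
Proof. by apply: sub_path path_nzpos => x y /ltnW. Qed.

Lemma nzpos_leq i : i \in z -> i <= n.
Proof. by rewrite nzpos_nzidx => /mapP [k]; rewrite mem_nzidx => /andP [kn _] ->. Qed.

Lemma size_nzpos : size z = l.
Proof. by rewrite nzpos_nzidx size_map size_nzidx. Qed.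

Lemma nth_nzpos j : j < l -> nth 0 z j = (nth 0 (nzidx n a) j).+1.
Proof. by move=> jl; rewrite nzpos_nzidx (nth_map 0) ?size_nzidx. Qed.

Lemma last_nzpos_leq : last 0 z <= n.
Proof. by have := mem_last 0 z; rewrite inE => /orP [/eqP ->|/nzpos_leq]. Qed.

Lemma nzpos_tail k : last 0 z <= k < n -> nth 0 a k = 0.
Proof.
case/andP=> zk kn; apply/eqP/negPn/negP => ak.
have : k.+1 \in 0 :: z by rewrite inE nzpos_nzidx map_f ?orbT // mem_nzidx ak andbT.
by move/(leq_last path_leq_nzpos); lia.
Qed.

Lemma nzpos_block_ge j : j < l ->
  nth 0 (flat a) j <= \sum_(nth 0 (0 :: z) j <= k < nth 0 z j) nth 0 a k.
Proof.
move=> jl; have lo_le : nth 0 (0 :: z) j <= nth 0 (nzidx n a) j.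
  case: j jl => [|j] jl //=; rewrite nth_nzpos; last lia.
  by apply: (sorted_ltn_nth ltn_trans 0 sorted_nzidx); rewrite ?inE ?size_nzidx //; lia.
rewrite nth_nzpos // big_nat_recr //= flat_nzidx (nth_map 0) ?size_nzidx //.
exact: leq_addl.
Qed.

(* Each block contains the nonzero entry flat(a)_j, and the blocks together carry at most |a|. *)
Lemma nzpos_block_sum j : j < l ->
  \sum_(nth 0 (0 :: z) j <= k < nth 0 z j) nth 0 a k = nth 0 (flat a) j.
Proof.
move=> jl.
have blocks_le : \sum_(0 <= i < l) \sum_(nth 0 (0 :: z) i <= k < nth 0 z i) nth 0 a k
    <= \sum_(0 <= i < l) nth 0 (flat a) i.
  rewrite -{1}size_nzpos (sum_blocks _ path_leq_nzpos) -sumn_nth sumn_flat sumn_tuple.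
  by rewrite [leqRHS](big_cat_nat (n := last 0 z)) ?leq_addr ?last_nzpos_leq.
have blocks_ge : \sum_(i < l) nth 0 (flat a) i
    <= \sum_(i < l) \sum_(nth 0 (0 :: z) i <= k < nth 0 z i) nth 0 a k.
  by apply: leq_sum => i _; apply: nzpos_block_ge.
rewrite !big_mkord in blocks_le.
have [_] := @leqif_sum _ xpredT _ _ _
  (fun i : 'I_l => fun _ => leqif_eq (nzpos_block_ge (ltn_ord i))).
by rewrite eqn_leq blocks_le blocks_ge => /esym/forallP/(_ (Ordinal jl))/eqP.
Qed.

(* The trivial glide closes its j-th block at the j-th nonzero entry: i_j = n_j. *)
Lemma glide_self : glide a a (nseq_tuple n false).
Proof.
have size_s : size (map (@inord n) z) == l by rewrite size_map size_nzpos.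
apply/existsP; exists (Tuple size_s).
have -> : map val (Tuple size_s) = z.
  rewrite /= -map_comp -[RHS]map_id; apply/eq_in_map => i /nzpos_leq i_le /=.
  by rewrite inordK.
rewrite /= path_nzpos /=; apply/and3P; split.
- by apply/allP.
- by apply/allP => k; rewrite mem_iota /= subnKC ?last_nzpos_leq // => /nzpos_tail ->.
- apply/allP => j; rewrite mem_iota /= => jl; apply/andP; split.
    rewrite sumnE big_map nzpos_block_sum // (@eq_count _ _ pred0) ?count_pred0 ?addn0 //.
    by move=> k; rewrite /= nth_nseq if_same.
  by apply/allP => k _; rewrite nth_nseq if_same implybT.
Qed.

End SelfGlide.

Section Coefficients.
Variables (n : nat) (a e : n.-tuple nat).

Lemma glide_self_black r : (iskomp a r && glide a a r) = (r == nseq_tuple n false).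
Proof.
apply/idP/eqP => [/andP [komp g]|->]; last first.
  by rewrite glide_self andbT; apply/allP => k _; rewrite nth_nseq if_same.
have r0 : count id r = 0 by have := glide_sumn komp g; lia.
have /hasPn r_black : ~~ has id r by rewrite has_count r0.
apply: val_inj => /=.
apply: (@eq_from_nth _ false); rewrite ?size_tuple ?size_nseq // => k kn.
by rewrite nth_nseq if_same; apply/negbTE/r_black/mem_nth; rewrite size_tuple.
Qed.

Lemma Gcoef_diag : Gcoef a a 0 = 1.
Proof.
rewrite /Gcoef -(card1 (nseq_tuple n false)); apply: eq_card => r.
rewrite !inE andbA glide_self_black.
by case: eqP => //= ->; rewrite count_nseq.
Qed.

Lemma Gm1coef_diag : Gm1coef a a = 1%R.
Proof.
rewrite /Gm1coef (eq_bigl (pred1 (nseq_tuple n false))) => [|r]; last exact: glide_self_black.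
by rewrite big_pred1_eq /= count_nseq expr0.
Qed.

Lemma Gcoef_neq0 k : Gcoef a e k != 0 -> exists2 r, iskomp e r & glide a e r /\ count id r = k.
Proof. by rewrite -lt0n => /card_gt0P [r]; rewrite inE => /and3P [komp g /eqP]; exists r. Qed.

Lemma Gm1coef_neq0 : Gm1coef a e != 0%R -> exists2 r, iskomp e r & glide a e r.
Proof.
rewrite /Gm1coef; case: (pickP (fun r => iskomp e r && glide a e r)) => [r /andP []|none].
  by exists r.
by rewrite big_pred0 ?eqxx.
Qed.

Lemma glide_triangular r : glide a e r -> e = a \/ dweight n a < dweight n e.
Proof.
move=> g; have [->|ae] := eqVneq e a; [by left | right].
by apply: dweight_lt; [apply: glide_psum g | rewrite eq_sym].
Qed.

End Coefficients.

Definition bounded_tuples n K : seq (n.-tuple nat) :=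
  [seq map_tuple (@nat_of_ord K.+1) t | t <- enum {: n.-tuple 'I_K.+1}].

Lemma mem_bounded_tuples n K (e : n.-tuple nat) :
  all (fun x => x <= K) e -> e \in bounded_tuples n K.
Proof.
move=> /allP eK; apply/mapP; exists (map_tuple (@inord K) e); first by rewrite mem_enum.
apply: val_inj => /=; rewrite -map_comp -[LHS]map_id; apply/eq_in_map => x /eK xK /=.
by rewrite inordK.
Qed.

Section BetaBasis.
Variable n : nat.
Implicit Types (p m : nat * n.-tuple nat) (e : n.-tuple nat).

Lemma bG_neq0 p e d : (bG p e d != 0)%R ->
  exists2 r, iskomp e r & [/\ glide p.2 e r, p.1 <= d & count id r = d - p.1].
Proof.
rewrite /bG; case: leqP => [kd /Gcoef_neq0 [r komp [g cr]]|_]; last by rewrite eqxx.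
by exists r.
Qed.

Lemma bG_diag p : bG p p.2 p.1 = 1%R.
Proof. by rewrite /bG leqnn subnn Gcoef_diag. Qed.

Lemma bG_triangular p m : (bG p m.2 m.1 != 0)%R -> m = p \/ dweight n p.2 < dweight n m.2.
Proof.
case: p m => [k a] [d e] /bG_neq0 [r komp [/= g kd cr]].
case: (glide_triangular g) => [ea|]; [left | by right].
have := glide_sumn komp g; rewrite ea /= => sa.
by rewrite (_ : d = k) //; lia.
Qed.

Let pot m := sumn m.2 + m.1 - 2 * nzcount m.2.

Lemma bG_pot p m : (bG p m.2 m.1 != 0)%R -> pot m <= pot p.
Proof.
case: p m => [k a] [d e] /bG_neq0 [r komp [/= g kd cr]].
have := glide_sumn komp g; have := glide_nzcount komp g.
by rewrite /pot /= -nzcount_flat; lia.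
Qed.

Lemma finsupp_bG p : finsupp2 (bG p).
Proof.
exists (p.1 + sumn p.2 + n).+1 => e d /bG_neq0 [r komp [g kd cr]].
have se := glide_sumn komp g; have rn := count_tuple_leq id r.
apply/andP; split; first lia.
by apply/allP => x /mem_leq_sumn; lia.
Qed.

Lemma bG_span f : finsupp2 f ->
  exists (I : seq (nat * n.-tuple nat)) (c : nat * n.-tuple nat -> int),
    forall e d, f e d = (\sum_(p <- I) c p * bG p e d)%R.
Proof.
case=> N fN.
pose box M := [seq (d, e) | d <- iota 0 (M + 2 * n).+1, e <- bounded_tuples n (M + 2 * n)].
have mem_box M m : pot m <= M -> m \in box M.
  case: m => d e; rewrite /pot /= => pM; have nzn : nzcount e <= n := count_tuple_leq _ e.
  apply/allpairsP; exists (d, e); split => //; first by rewrite mem_iota /=; lia.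
  by apply/mem_bounded_tuples/all_leq_sumn => /=; lia.
have fM m : (f m.2 m.1 != 0)%R -> pot m <= n * N + N.
  case: m => d e /fN /andP [/= dN /sumn_leq_size]; rewrite size_tuple /pot /=.
  by have : nzcount e <= n := count_tuple_leq _ e; lia.
have [I [c fc]] := unitriangular_span (B := fun p m => bG p m.2 m.1)
  (w := fun m => dweight n m.2) bG_diag bG_triangular bG_pot mem_box fM.
by exists I, c => e d; apply: (fc (d, e)).
Qed.

Lemma bG_free (I : seq (nat * n.-tuple nat)) (c : nat * n.-tuple nat -> int) :
  uniq I -> (forall e d, (\sum_(p <- I) c p * bG p e d)%R = 0%R) ->
  forall p, p \in I -> c p = 0%R.
Proof.
move=> uI Ic0.
apply: (unitriangular_free (B := fun p m => bG p m.2 m.1) bG_diag bG_triangular uI).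
by case=> d e; apply: Ic0.
Qed.

End BetaBasis.

Section MinusOneBasis.
Variable n : nat.
Implicit Types (a e : n.-tuple nat).

Lemma Gm1coef_triangular a e : (Gm1coef a e != 0)%R -> e = a \/ dweight n a < dweight n e.
Proof. by case/Gm1coef_neq0 => r _; apply: glide_triangular. Qed.

Let pot e := sumn e - nzcount e.

Lemma Gm1coef_pot a e : (Gm1coef a e != 0)%R -> pot e <= pot a.
Proof.
case/Gm1coef_neq0 => r komp g; have := glide_sumn komp g; have := glide_nzcount komp g.
by rewrite /pot -nzcount_flat; lia.
Qed.

Lemma finsupp_Gm1coef a : finsupp1 (Gm1coef a).
Proof.
exists (sumn a + n).+1 => e /Gm1coef_neq0 [r komp g].
have se := glide_sumn komp g; have rn := count_tuple_leq id r.
by apply/allP => x /mem_leq_sumn; lia.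
Qed.

Lemma Gm1coef_span g : finsupp1 g ->
  exists (I : seq (n.-tuple nat)) (c : n.-tuple nat -> int),
    forall e, g e = (\sum_(a <- I) c a * Gm1coef a e)%R.
Proof.
case=> N gN.
have mem_box M e : pot e <= M -> e \in bounded_tuples n (M + n).
  rewrite /pot => pM; have nzn : nzcount e <= n := count_tuple_leq _ e.
  by apply/mem_bounded_tuples/all_leq_sumn; lia.
have gM e : (g e != 0)%R -> pot e <= n * N.
  by move/gN/sumn_leq_size; rewrite size_tuple /pot; lia.
exact: (unitriangular_span (@Gm1coef_diag n) (@Gm1coef_triangular) Gm1coef_pot mem_box gM).
Qed.

Lemma Gm1coef_free (I : seq (n.-tuple nat)) (c : n.-tuple nat -> int) :
  uniq I -> (forall e, (\sum_(a <- I) c a * Gm1coef a e)%R = 0%R) ->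
  forall a, a \in I -> c a = 0%R.
Proof.
exact: (unitriangular_free (@Gm1coef_diag n) (@Gm1coef_triangular) (I := I) (c := c)).
Qed.

End MinusOneBasis.

Unset Implicit Arguments.
Local Open Scope ring_scope.

Theorem mainTheorem1 (n : nat) (hn : (0 < n)%N) :
  ((forall p : nat * n.-tuple nat, finsupp2 (bG p)) /\
   (forall f : n.-tuple nat -> nat -> int, finsupp2 f ->
      exists (I : seq (nat * n.-tuple nat)) (c : nat * n.-tuple nat -> int),
        forall e d, f e d = \sum_(p <- I) c p * bG p e d) /\
   (forall (I : seq (nat * n.-tuple nat)) (c : nat * n.-tuple nat -> int),
      uniq I -> (forall e d, \sum_(p <- I) c p * bG p e d = 0) ->
      forall p, p \in I -> c p = 0)) /\
  ((forall a : n.-tuple nat, finsupp1 (Gm1coef a)) /\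
   (forall g : n.-tuple nat -> int, finsupp1 g ->
      exists (I : seq (n.-tuple nat)) (c : n.-tuple nat -> int),
        forall e, g e = \sum_(a <- I) c a * Gm1coef a e) /\
   (forall (I : seq (n.-tuple nat)) (c : n.-tuple nat -> int),
      uniq I -> (forall e, \sum_(a <- I) c a * Gm1coef a e = 0) ->
      forall a, a \in I -> c a = 0)).
Proof.
split.
  by split; [exact: finsupp_bG | split; [exact: bG_span | exact: bG_free]].
by split; [exact: finsupp_Gm1coef | split; [exact: Gm1coef_span | exact: Gm1coef_free]].
Qed.
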